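(* Suppose $J^d_\mu$ takes the same value for all $d\in\mathcal D$. Then a policy $d\in\mathcal D$, with quantities $(\mathbf P,\mathbf r,J_\mu,\mathbf g)$, satisfies $J^d_{\mu,\sigma}=\max_{d''\in\mathcal D}J^{d''}_{\mu,\sigma}$ if and only if for every $d'\in\mathcal D$ with $(\mathbf P',\mathbf r')$, $$\sum_{j\in\mathcal S}p'(i,j)g(j)+r'(i)-\beta(r'(i)-J_\mu)^2\ \le\ \sum_{j\in\mathcal S}p(i,j)g(j)+r(i)-\beta(r(i)-J_\mu)^2\qquad\text{for all } i\in\mathcal S.$$
   Context: Let $\mathcal S=\{1,\dots,S\}$ be a finite state space and $\mathcal A$ a finite action set. For $i,j\in\mathcal S$, $a\in\mathcal A$, let $p^a(i,j)\ge 0$ with $\sum_{j}p^a(i,j)=1$ be transition probabilities and $r(i,a)\in\mathbb R$ rewards. A deterministic stationary policy is a map $d:\mathcal S\to\mathcal A$; $\mathcal D$ denotes the set of such policies. Under $d$, $\mathbf P^d$ is the matrix with entries $p(i,j)=p^{d(i)}(i,j)$ and $\mathbf r^d$ the vector with entries $r(i)=r(i,d(i))$. Standing assumption: for every $d\in\mathcal D$ the chain with transition matrix $\mathbf P^d$ is irreducible, so it has a unique stationary distribution $\boldsymbol\pi^d$ (row vector, $\boldsymbol\pi^d\mathbf P^d=\boldsymbol\pi^d$, $\boldsymbol\pi^d\mathbf 1=1$) with all entries strictly positive. Define $J^d_\mu=\boldsymbol\pi^d\mathbf r^d$, $J^d_\sigma=\sum_i\pi^d(i)(r(i,d(i))-J^d_\mu)^2$,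 and for fixed $\beta>0$, $J^d_{\mu,\sigma}=J^d_\mu-\beta J^d_\sigma=\boldsymbol\pi^d\mathbf f^d$ with $f^d(i)=r(i,d(i))-\beta(r(i,d(i))-J^d_\mu)^2$. The performance potential $\mathbf g^d$ is any solution of $\mathbf g^d=\mathbf f^d-J^d_{\mu,\sigma}\mathbf 1+\mathbf P^d\mathbf g^d$ (unique up to an additive constant vector). *)

From HB Require Import structures.
From mathcomp Require Import all_boot all_order all_algebra.
Set Implicit Arguments. Unset Strict Implicit. Unset Printing Implicit Defensive.
Import Order.TTheory GRing.Theory Num.Theory.
Local Open Scope ring_scope.

(* States: 'I_n (i.e. {0,...,n-1}, standing for {1,...,S}); actions: a finType A.
   A deterministic stationary policy is a function d : 'I_n -> A. *)

Definition Pmat (R : pzRingType) (A : finType) (n : nat)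
  (p : A -> 'I_n -> 'I_n -> R) (d : 'I_n -> A) : 'M[R]_n :=
  \matrix_(i, j) p (d i) i j.

Definition transition_kernel (R : realFieldType) (A : finType) (n : nat)
  (p : A -> 'I_n -> 'I_n -> R) : Prop :=
  (forall a i j, 0 <= p a i j) /\ (forall a i, \sum_j p a i j = 1).

Definition irreducible (R : realFieldType) (n : nat) (P : 'M[R]_n) : Prop :=
  forall i j : 'I_n, exists k : nat, 0 < (P ^+ k) i j.

Definition stationary_dist (R : realFieldType) (n : nat) (P : 'M[R]_n)
  (pi : 'rV[R]_n) : Prop :=
  pi *m P = pi /\ (forall i, 0 <= pi 0 i) /\ \sum_i pi 0 i = 1.

Definition Jmu (R : realFieldType) (A : finType) (n : nat)
  (r : 'I_n -> A -> R) (pi : 'rV[R]_n) (d : 'I_n -> A) : R :=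
  \sum_i pi 0 i * r i (d i).

Definition fvec (R : realFieldType) (A : finType) (n : nat)
  (r : 'I_n -> A -> R) (beta : R) (pi : 'rV[R]_n) (d : 'I_n -> A) (i : 'I_n) : R :=
  r i (d i) - beta * (r i (d i) - Jmu r pi d) ^+ 2.

Definition Jsigma (R : realFieldType) (A : finType) (n : nat)
  (r : 'I_n -> A -> R) (pi : 'rV[R]_n) (d : 'I_n -> A) : R :=
  \sum_i pi 0 i * (r i (d i) - Jmu r pi d) ^+ 2.

Definition Jmusigma (R : realFieldType) (A : finType) (n : nat)
  (r : 'I_n -> A -> R) (beta : R) (pi : 'rV[R]_n) (d : 'I_n -> A) : R :=
  Jmu r pi d - beta * Jsigma r pi d.

Definition potential (R : realFieldType) (A : finType) (n : nat)
  (p : A -> 'I_n -> 'I_n -> R) (r : 'I_n -> A -> R) (beta : R)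
  (pi : 'rV[R]_n) (d : 'I_n -> A) (g : 'I_n -> R) : Prop :=
  forall i, g i = fvec r beta pi d i - Jmusigma r beta pi d
                  + \sum_j p (d i) i j * g j.

From HB Require Import structures.
From mathcomp Require Import all_boot all_order all_algebra.
From mathcomp Require Import ring.
Import Order.TTheory GRing.Theory Num.Theory.
Local Open Scope ring_scope.

Set Implicit Arguments.
Unset Strict Implicit.

(* Write J for the common mean reward and, for a potential g of the policy d,
   let  Q d' i := sum_j p'(i,j) g(j) + r'(i) - beta (r'(i) - J)^2  be the
   one-step value of playing d' at i and then following g.  Because J is
   policy-independent, f^{d'}(i) = r'(i) - beta (r'(i) - J)^2, and averaging
   against the stationary law pi' of d' (which absorbs P' g into g) gives the
   performance difference formula
        J^{d'}_{mu,sigma} - J^d_{mu,sigma} = sum_i pi'(i) (Q d' i - Q d i).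
   If Q d' <= Q d pointwise, every term is <= 0, so d is optimal.  Conversely,
   if Q d' i > Q d i for some i, the policy that agrees with d except that it
   plays d'(i) at i has a difference reduced to the single term
   pi''(i) (Q d' i - Q d i), which is > 0 because stationary laws of
   irreducible chains are positive everywhere. *)

Lemma matrix_pow_ge0 (R : realFieldType) (n : nat) (P : 'M[R]_n) :
  (forall i j, 0 <= P i j) -> forall k i j, 0 <= (P ^+ k) i j.
Proof.
move=> P_ge0; elim=> [|k IHk] i j; first by rewrite expr0 mxE ler0n.
by rewrite exprS -mulmxE mxE; apply: sumr_ge0 => l _; apply: mulr_ge0.
Qed.

Lemma invariant_pow (R : pzRingType) (n : nat) (P : 'M[R]_n) (pi : 'rV[R]_n) :
  pi *m P = pi -> forall k, pi *m P ^+ k = pi.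
Proof.
move=> piP; elim=> [|k IHk]; first by rewrite expr0 mulmx1.
by rewrite exprS -mulmxE mulmxA piP.
Qed.

(* A stationary distribution of an irreducible nonnegative matrix charges
   every state: some state j has positive mass, and j reaches i in k steps. *)
Lemma stationary_dist_gt0 (R : realFieldType) (n : nat) (P : 'M[R]_n)
    (pi : 'rV[R]_n) :
  (forall i j, 0 <= P i j) -> irreducible P -> stationary_dist P pi ->
  forall i, 0 < pi 0 i.
Proof.
move=> P_ge0 P_irr [piP [pi_ge0 pi_sum1]] i.
have [j pij_gt0] : exists j, 0 < pi 0 j.
  case: (pickP (fun j => 0 < pi 0 j)) => [j ? | no_pos]; first by exists j.
  have : \sum_l pi 0 l <= 0 by apply: sumr_le0 => l _; rewrite leNgt no_pos.
  by rewrite pi_sum1 ler10.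
have [k Pk_gt0] := P_irr j i.
have /matrixP/(_ 0 i) := invariant_pow piP k; rewrite mxE => <-.
rewrite (bigD1 j) //=; apply: ltr_pwDl; first exact: mulr_gt0.
by apply: sumr_ge0 => l _; apply: mulr_ge0 => //; apply: matrix_pow_ge0.
Qed.

Lemma Jmusigma_average (R : realFieldType) (A : finType) (n : nat)
    (r : 'I_n -> A -> R) (beta : R) (pi : 'rV[R]_n) (d : 'I_n -> A) :
  Jmusigma r beta pi d = \sum_i pi 0 i * fvec r beta pi d i.
Proof.
rewrite /Jmusigma /Jsigma mulr_sumr /Jmu -sumrB.
by apply: eq_bigr => i _; rewrite /fvec /Jmu; ring.
Qed.

Lemma stationary_average_step (R : realFieldType) (A : finType) (n : nat)
    (p : A -> 'I_n -> 'I_n -> R) (d : 'I_n -> A) (pi : 'rV[R]_n)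
    (g : 'I_n -> R) :
  pi *m Pmat p d = pi ->
  \sum_i pi 0 i * (\sum_j p (d i) i j * g j) = \sum_j pi 0 j * g j.
Proof.
move=> piP; under eq_bigr => i _ do rewrite mulr_sumr.
rewrite exchange_big /=; apply: eq_bigr => j _.
have /matrixP/(_ 0 j) := piP; rewrite mxE => <-.
by rewrite mulr_suml; apply: eq_bigr => i _; rewrite mxE mulrA.
Qed.

Definition switch_at (n : nat) (A : Type) (d : 'I_n -> A) (i : 'I_n) (a : A)
    : 'I_n -> A :=
  fun k => if k == i then a else d k.

Section PerformanceDifference.

Variables (R : realFieldType) (A : finType) (n : nat).
Variables (p : A -> 'I_n -> 'I_n -> R) (r : 'I_n -> A -> R) (beta J : R).
Variable g : 'I_n -> R.

Definition Qvalue (d' : 'I_n -> A) (i : 'I_n) : R :=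
  \sum_j p (d' i) i j * g j + r i (d' i) - beta * (r i (d' i) - J) ^+ 2.

Lemma Qvalue_switch_elsewhere (d : 'I_n -> A) (i k : 'I_n) (a : A) :
  k != i -> Qvalue (switch_at d i a) k = Qvalue d k.
Proof. by move=> k_neq_i; rewrite /Qvalue /switch_at (negbTE k_neq_i). Qed.

Lemma Qvalue_switch_here (d d' : 'I_n -> A) (i : 'I_n) :
  Qvalue (switch_at d i (d' i)) i = Qvalue d' i.
Proof. by rewrite /Qvalue /switch_at eqxx. Qed.

Lemma Qvalue_potential (pi : 'rV[R]_n) (d : 'I_n -> A) :
  Jmu r pi d = J -> potential p r beta pi d g ->
  forall i, Qvalue d i = g i + Jmusigma r beta pi d.
Proof.
by move=> Jd g_pot i; rewrite (g_pot i) /Qvalue /fvec Jd; ring.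
Qed.

Lemma performance_difference (d d' : 'I_n -> A) (pi' : 'rV[R]_n) (eta : R) :
  stationary_dist (Pmat p d') pi' -> Jmu r pi' d' = J ->
  (forall i, Qvalue d i = g i + eta) ->
  Jmusigma r beta pi' d' - eta = \sum_i pi' 0 i * (Qvalue d' i - Qvalue d i).
Proof.
move=> [pi'P [_ pi'_sum1]] Jd' Qd.
have Qd'_avg : \sum_i pi' 0 i * Qvalue d' i
    = Jmusigma r beta pi' d' + \sum_j pi' 0 j * g j.
  rewrite Jmusigma_average -(stationary_average_step g pi'P) -big_split /=.
  by apply: eq_bigr => i _; rewrite /Qvalue /fvec Jd'; ring.
have Qd_avg : \sum_i pi' 0 i * Qvalue d i = \sum_j pi' 0 j * g j + eta.
  under eq_bigr => i _ do rewrite Qd mulrDr.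
  by rewrite big_split /= -mulr_suml pi'_sum1 mul1r.
under eq_bigr => i _ do rewrite mulrBr.
by rewrite sumrB Qd'_avg Qd_avg; ring.
Qed.

Lemma switch_difference (d : 'I_n -> A) (i : 'I_n) (a : A) (pi : 'rV[R]_n) :
  \sum_k pi 0 k * (Qvalue (switch_at d i a) k - Qvalue d k)
  = pi 0 i * (Qvalue (switch_at d i a) i - Qvalue d i).
Proof.
rewrite (bigD1 i) //= big1 ?addr0 // => k k_neq_i.
by rewrite Qvalue_switch_elsewhere // subrr mulr0.
Qed.

End PerformanceDifference.

Unset Implicit Arguments.

Theorem mainTheorem4 (R : realFieldType) (A : finType) (n : nat)
  (p : A -> 'I_n -> 'I_n -> R) (r : 'I_n -> A -> R) (beta : R)
  (pi : ('I_n -> A) -> 'rV[R]_n)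
  (Hp : transition_kernel p)
  (Hbeta : 0 < beta)
  (Hirr : forall d : 'I_n -> A, irreducible (Pmat p d))
  (Hpi : forall d : 'I_n -> A, stationary_dist (Pmat p d) (pi d))
  (Hconst : forall d1 d2 : 'I_n -> A, Jmu r (pi d1) d1 = Jmu r (pi d2) d2)
  (d : 'I_n -> A) (g : 'I_n -> R)
  (Hg : potential p r beta (pi d) d g) :
  (forall d'' : 'I_n -> A,
      Jmusigma r beta (pi d'') d'' <= Jmusigma r beta (pi d) d)
  <->
  (forall (d' : 'I_n -> A) (i : 'I_n),
      \sum_j p (d' i) i j * g j + r i (d' i)
        - beta * (r i (d' i) - Jmu r (pi d) d) ^+ 2
      <= \sum_j p (d i) i j * g j + r i (d i)
        - beta * (r i (d i) - Jmu r (pi d) d) ^+ 2).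
Proof.
set J := Jmu r (pi d) d.
have Qd := Qvalue_potential erefl Hg.
have diff d' := performance_difference (Hpi d') (Hconst d' d) Qd.
split=> [d_opt d' i | Q_le d''].
- rewrite -/(Qvalue p r beta J g d' i) -/(Qvalue p r beta J g d i).
  rewrite leNgt; apply/negP => Q_gt.
  pose d'' := switch_at d i (d' i).
  have P''_ge0 k l : 0 <= Pmat p d'' k l by rewrite mxE; case: Hp.
  have pi''_gt0 := stationary_dist_gt0 P''_ge0 (Hirr d'') (Hpi d'') i.
  have := d_opt d''; rewrite -subr_le0 diff switch_difference leNgt.
  move/negP; apply; apply: mulr_gt0 => //.
  by rewrite subr_gt0 Qvalue_switch_here.
- rewrite -subr_le0 diff; apply: sumr_le0 => i _.
  apply: mulr_ge0_le0; first by case: (Hpi d'') => _ [].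
  by rewrite subr_le0; apply: Q_le.
Qed.
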